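(* For every integer $k \geq 1$, let $\mathcal{P}(k)$ denote the greatest common divisor of all the sums $\sum_{i=1}^{k} P_{n+i}$, $n \geq 0$. Then $$\mathcal{P}(k) = \begin{cases} 2P_{k/2}, & \text{if } k \equiv 0 \pmod 4;\\ Q_{k/2}, & \text{if } k \equiv 2 \pmod 4;\\ 1, & \text{if } k \equiv 1,3 \pmod 4.\end{cases}$$
   Context: The Pell sequence $(P_n)_{n\ge0}$ is defined by $P_0=0$, $P_1=1$, $P_n = 2P_{n-1}+P_{n-2}$. The associated Pell sequence $(Q_n)_{n\ge0}$ is defined by $Q_0=1$, $Q_1=1$, $Q_n=2Q_{n-1}+Q_{n-2}$. *)

From mathcomp Require Import all_boot.
Set Implicit Arguments. Unset Strict Implicit. Unset Printing Implicit Defensive.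

Fixpoint pell (n : nat) : nat :=
  match n with
  | 0 => 0
  | 1 => 1
  | (m.+1 as n').+1 => 2 * pell n' + pell m
  end.

Fixpoint apell (n : nat) : nat :=
  match n with
  | 0 => 1
  | 1 => 1
  | (m.+1 as n').+1 => 2 * apell n' + apell m
  end.

Definition is_gcd_of (S : nat -> nat) (g : nat) : Prop :=
  (forall n, g %| S n) /\ (forall e, (forall n, e %| S n) -> e %| g).

Definition pell_window (k n : nat) : nat := \sum_(1 <= i < k.+1) pell (n + i).

From mathcomp Require Import all_boot zify.

(* The window sums S n := pell_window k n satisfy the Pell recurrence in n, and
   2 S n + Q_(n+1) = Q_(n+k+1). For k = 2m, the addition formula
   u_(a+b+1) = u_(a+1) P_(b+1) + u_a P_b and Cassini's identity show, at n = 0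
   and n = 1 and hence for all n, that S n = 2 P_m P_(n+m+1) if m is even and
   S n = Q_m Q_(n+m+1) if m is odd; as consecutive terms of P and of Q are
   coprime, the gcd is the constant factor. For odd k, a common divisor e of
   S 0 and S 1 divides P_k = 3 S 0 - S 1 and P_(k+1) - 1 = S 1 - S 0, so
   Cassini's identity P_(k+1)^2 + 1 = P_k (2 P_(k+1) + P_k) forces e | 2,
   whereas P_k is odd. *)

Definition pell_like (u : nat -> nat) : Prop :=
  forall n, u n.+2 = 2 * u n.+1 + u n.

Lemma pell_like_pell : pell_like pell. Proof. by []. Qed.

Lemma pell_like_apell : pell_like apell. Proof. by []. Qed.

Lemma pell_like_window k : pell_like (pell_window k).
Proof.
move=> n; rewrite /pell_window big_distrr -big_split /=.
by apply: eq_bigr.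
Qed.

Lemma pell_like_scale_shift c a u :
  pell_like u -> pell_like (fun n => c * u (n + a)).
Proof. by move=> u_rec n /=; rewrite !addSn u_rec mulnDr mulnCA. Qed.

Lemma pell_like_eq u v : pell_like u -> pell_like v ->
  u 0 = v 0 -> u 1 = v 1 -> u =1 v.
Proof.
move=> u_rec v_rec uv0 uv1; elim/ltn_ind=> -[|[|n]] // IH.
by rewrite u_rec v_rec !IH.
Qed.

Lemma coprime_pell_like u n : pell_like u -> coprime (u 0) (u 1) ->
  coprime (u n) (u n.+1).
Proof.
move=> u_rec u01; elim: n => // n IH.
by rewrite /coprime u_rec gcdnMDl gcdnC.
Qed.

Lemma pell_like_addS u a b : pell_like u ->
  u (a + b).+1 = u a.+1 * pell b.+1 + u a * pell b.
Proof.
move=> u_rec; elim/ltn_ind: b => -[|[|b]] IH.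
- by rewrite addn0 muln1 muln0 addn0.
- by rewrite addn1 u_rec muln1 mulnC.
- rewrite addnS u_rec [in u (a + b.+1)]addnS !IH //.
  rewrite (pell_like_pell b.+1) pell_like_pell; nia.
Qed.

Lemma odd_pell n : odd (pell n) = odd n.
Proof.
elim/ltn_ind: n => -[|[|n]] // IH.
by rewrite pell_like_pell oddD oddM /= IH ?negbK.
Qed.

Lemma apellS n : apell n.+1 = pell n.+1 + pell n.
Proof.
elim/ltn_ind: n => -[|[|n]] // IH.
rewrite pell_like_apell !IH // !pell_like_pell; lia.
Qed.

Lemma apell_pell n : apell n + pell n = pell n.+1.
Proof. by case: n => // n; rewrite apellS pell_like_pell; lia. Qed.

(* P_(n+1)^2 - 2 P_n P_(n+1) - P_n^2 = (-1)^n, stated without subtraction. *)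
Lemma pell_cassini n :
  pell n.+1 ^ 2 + odd n = 2 * pell n * pell n.+1 + pell n ^ 2 + ~~ odd n.
Proof.
elim: n => // n IH; rewrite pell_like_pell /=.
by case: (odd n) IH => /= IH; nia.
Qed.

Lemma pell_window_apell k n :
  2 * pell_window k n + apell n.+1 = apell (n + k).+1.
Proof.
elim: k => [|k IH]; first by rewrite /pell_window big_geq ?addn0.
rewrite /pell_window big_nat_recr // -/(pell_window k n) addnS.
by move: IH; rewrite !apellS pell_like_pell /=; lia.
Qed.

Lemma pell_window_double m :
  2 * pell_window m.*2 0 + 1 + pell m ^ 2
    = pell m.+1 ^ 2 + 2 * pell m * pell m.+1 /\
  2 * pell_window m.*2 1 + 3
    = 3 * pell m.+1 ^ 2 + 2 * pell m * pell m.+1 + pell m ^ 2.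
Proof.
have := pell_window_apell m.*2 0; rewrite add0n -addnn.
rewrite (pell_like_addS _ _ _ pell_like_apell) => S0.
have := pell_window_apell m.*2 1; rewrite add1n -addnn -addSn.
rewrite (pell_like_addS _ _ _ pell_like_apell) => S1.
move: S0 S1 (apell_pell m); rewrite !apellS pell_like_pell /=; nia.
Qed.

Lemma pell_window_double_even m n : ~~ odd m ->
  pell_window m.*2 n = 2 * pell m * pell (n + m.+1).
Proof.
move=> m_even; move: n; apply: pell_like_eq.
- exact: pell_like_window.
- exact: pell_like_scale_shift.
all: have := pell_cassini m; have := pell_window_double m.
all: rewrite (negbTE m_even) ?add0n ?add1n ?pell_like_pell; nia.
Qed.

Lemma pell_window_double_odd m n : odd m ->
  pell_window m.*2 n = apell m * apell (n + m.+1).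
Proof.
move=> m_odd; move: n; apply: pell_like_eq.
- exact: pell_like_window.
- exact: pell_like_scale_shift.
all: have := pell_cassini m; have := pell_window_double m; have := apell_pell m.
all: rewrite m_odd ?add0n ?add1n !apellS ?pell_like_pell; nia.
Qed.

Lemma is_gcd_of_scaled (S v : nat -> nat) c :
  (forall n, S n = c * v n) -> coprime (v 0) (v 1) -> is_gcd_of S c.
Proof.
move=> S_def v01; split=> [n | e e_dvd]; first by rewrite S_def dvdn_mulr.
have := dvdn_gcd e (S 0) (S 1); rewrite !e_dvd !S_def -muln_gcdr.
by rewrite (eqP v01) muln1; apply.
Qed.

Lemma pell_window_gcd_double m :
  is_gcd_of (pell_window m.*2) (if odd m then apell m else 2 * pell m).
Proof.
case: ifP => [m_odd | m_even].
- apply: (is_gcd_of_scaled _ (fun n => apell (n + m.+1))).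
    by move=> n; apply: pell_window_double_odd.
  by rewrite add0n add1n; apply: coprime_pell_like.
- apply: (is_gcd_of_scaled _ (fun n => pell (n + m.+1))).
    by move=> n; apply: pell_window_double_even; rewrite m_even.
  by rewrite add0n add1n; apply: coprime_pell_like.
Qed.

Lemma pell_window_gcd_odd k : odd k -> is_gcd_of (pell_window k) 1.
Proof.
move=> k_odd; split=> [n | e e_dvd]; first exact: dvd1n.
have := pell_window_apell k 0; have := pell_window_apell k 1.
rewrite add0n add1n !apellS (pell_like_pell k).
have := pell_cassini k; have := odd_pell k; rewrite k_odd.
have := e_dvd 0; have := e_dvd 1.
move: (pell_window k 0) (pell_window k 1) (pell k) (pell k.+1).
move=> s0 s1 x y e_s1 e_s0 x_odd /= cassini S1 S0.
have e_x : e %| x.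
  by rewrite -(dvdn_addr _ e_s1) (_ : s1 + x = 3 * s0) ?dvdn_mull //; lia.
have e_2 : e %| 2.
  have y_def : s1 + 1 = s0 + y by lia.
  have cassini_sums : s1 * (s1 + 2) + 2 = s0 * (s0 + 2 * y) + x * (2 * y + x).
    have : (s1 + 1) ^ 2 = (s0 + y) ^ 2 by rewrite y_def.
    lia.
  rewrite -(dvdn_addr _ (dvdn_mulr (s1 + 2) e_s1)) cassini_sums.
  by rewrite dvdn_add // dvdn_mulr.
by rewrite -(eqP (_ : coprime 2 x)) ?dvdn_gcd ?e_2 ?coprime2n.
Qed.

Theorem theorem15 (k : nat) (hk : 1 <= k) :
  is_gcd_of (pell_window k)
    (if k %% 4 == 0 then 2 * pell (k %/ 2)
     else if k %% 4 == 2 then apell (k %/ 2)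
     else 1).
Proof.
have [j [r [-> r_lt4]]] : exists j r, k = j * 4 + r /\ r < 4.
  by exists (k %/ 4), (k %% 4); rewrite -divn_eq ltn_pmod.
have -> : (j * 4 + r) %% 4 = r by lia.
case: r r_lt4 => [|[|[|[|r]]]] // _.
- have -> : (j * 4 + 0) %/ 2 = j.*2 by lia.
  have -> : j * 4 + 0 = j.*2.*2 by lia.
  by have := pell_window_gcd_double j.*2; rewrite odd_double.
- by apply: pell_window_gcd_odd; rewrite oddD oddM andbF.
- have -> : (j * 4 + 2) %/ 2 = j.*2.+1 by lia.
  have -> : j * 4 + 2 = j.*2.+1.*2 by lia.
  by have := pell_window_gcd_double j.*2.+1; rewrite /= odd_double.
- by apply: pell_window_gcd_odd; rewrite oddD oddM andbF.
Qed.
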